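(* Let $\mathcal{N}=(Q,\Sigma,\Delta,q_0,F)$ be a one-counter net. If Eve wins the letter game on $\mathcal{N}$, then she has a winning strategy in the letter game that depends only on the current configuration and the letter chosen by Adam, i.e. given by a partial function $\sigma:(Q\times\mathbb{N})\times\Sigma\to\Delta$.
   Context: A one-counter net (OCN) is $\mathcal{N}=(Q,\Sigma,\Delta,q_0,F)$ with $Q$ finite, $\Sigma$ finite, $q_0\in Q$, $F\subseteq Q$, $\Delta\subseteq Q\times\Sigma\times\{-1,0,1\}\times Q$; configurations $(q,n)\in Q\times\mathbb{N}$, step $(q,n)\xrightarrow{a,d}(p,n+d)$ if $(q,a,d,p)\in\Delta$ and $n+d\ge0$; runs start at $(q_0,0)$ and are accepting if the last state is in $F$; $\mathcal{L}(\mathcal{N})$ is the set of words with an accepting run. Letter game: positions $(c,w)$, start $((q_0,0),\varepsilon)$; each round Adam picks $a\in\Sigma$, Eve picks a step $c\xrightarrow{a,d}c'$; if Eve has none and $wa$ is a prefix of a word of $\mathcal{L}(\mathcal{N})$ she loses; if $wa\in\mathcal{L}(\mathcal{N})$ but the state of $c'$ is not in $F$, Adam wins; otherwise continue from $(c',wa)$; Eve wins infinite plays. *)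

From mathcomp Require Import all_boot all_order all_algebra.
Set Implicit Arguments. Unset Strict Implicit. Unset Printing Implicit Defensive.
Import GRing.Theory Num.Theory.

Inductive eff := Dm | D0 | Dp.

Definition eff_val (d : eff) : int :=
  match d with Dm => (-1)%R | D0 => 0%R | Dp => 1%R end.

Record OCN (Q Sigma : finType) := MkOCN {
  delta : Q -> Sigma -> eff -> Q -> bool;
  q0 : Q;
  final : {set Q}
}.

Section OCNDefs.
Variables (Q Sigma : finType) (N : OCN Q Sigma).

Definition conf := (Q * nat)%type.
Definition trans := (Q * Sigma * eff * Q)%type.

(* c --a,d--> c' using transition t = (q,a,d,p) in Delta, with n + d >= 0 *)
Definition step (c : conf) (a : Sigma) (t : trans) (c' : conf) : Prop :=
  match t with (q, b, d, p) =>
    [/\ q = c.1, b = a, delta N q b d p, c'.1 = p &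
        (Posz c'.2 = Posz c.2 + eff_val d)%R]
  end.

Inductive reaches : conf -> seq Sigma -> conf -> Prop :=
| reaches_nil c : reaches c [::] c
| reaches_cons c a t c' w c'' :
    step c a t c' -> reaches c' w c'' -> reaches c (a :: w) c''.

Definition init_conf : conf := (q0 N, 0).

Definition lang (w : seq Sigma) : Prop :=
  exists c, reaches init_conf w c /\ c.1 \in final N.

Definition is_prefix_of_lang (w : seq Sigma) : Prop :=
  exists v, lang (w ++ v).

(* Positions of the letter game: (configuration, word read so far). *)
Definition position := (conf * seq Sigma)%type.

(* General (history-dependent) strategy of Eve: given the history of previous
   positions, the current position and Adam's letter, she (partially) picks a
   transition. *)
Definition strategy := seq position -> position -> Sigma -> option trans.

Definition pos_strategy := conf -> Sigma -> option trans.

Definition lift_pos (s : pos_strategy) : strategy :=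
  fun _ pos a => s pos.1 a.

Inductive outcome :=
| Cont of seq position & position
| EveWon
| AdamWon.

Definition valid_choice (c : conf) (a : Sigma) (o : option trans) (c' : conf) :=
  exists t, o = Some t /\ step c a t c'.

Inductive round (s : strategy) (a : Sigma) : outcome -> outcome -> Prop :=
| round_adam_acc h c w c' :
    valid_choice c a (s h (c, w) a) c' ->
    lang (rcons w a) -> c'.1 \notin final N ->
    round s a (Cont h (c, w)) AdamWon
| round_cont h c w c' :
    valid_choice c a (s h (c, w) a) c' ->
    ~ (lang (rcons w a) /\ c'.1 \notin final N) ->
    round s a (Cont h (c, w)) (Cont (rcons h (c, w)) (c', rcons w a))
| round_illegal h c w :
    (forall c', ~ valid_choice c a (s h (c, w) a) c') ->
    (exists t c', step c a t c') ->
    round s a (Cont h (c, w)) AdamWon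
| round_stuck_lose h c w :
    (forall c', ~ valid_choice c a (s h (c, w) a) c') ->
    ~ (exists t c', step c a t c') ->
    is_prefix_of_lang (rcons w a) ->
    round s a (Cont h (c, w)) AdamWon
| round_stuck_win h c w :
    (forall c', ~ valid_choice c a (s h (c, w) a) c') ->
    ~ (exists t c', step c a t c') ->
    ~ is_prefix_of_lang (rcons w a) ->
    round s a (Cont h (c, w)) EveWon
| round_eve : round s a EveWon EveWon
| round_adam : round s a AdamWon AdamWon.

Definition is_play (s : strategy) (alpha : nat -> Sigma) (o : nat -> outcome) :=
  o 0 = Cont [::] (init_conf, [::]) /\
  forall n, round s (alpha n) (o n) (o n.+1).

Definition winning (s : strategy) : Prop :=
  forall alpha o, is_play s alpha o -> forall n, o n <> AdamWon.

Definition eve_wins_letter_game : Prop := exists s, winning s.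

End OCNDefs.

(* Fix a winning strategy s of Eve. Along any play consistent with s, the
   configuration c reached after reading w "knows" the future of w: since Eve
   never loses, w u is in the language exactly when u is accepted from c.
   Hence all positions consistent with s that share a configuration are
   interchangeable, and Eve may play positionally by replaying, at c, the
   move s makes at one fixed such position. *)
From mathcomp Require Import all_boot all_order all_algebra.
From Stdlib Require Import Classical ClassicalEpsilon.
Set Implicit Arguments. Unset Strict Implicit. Unset Printing Implicit Defensive.

Section LetterGame.
Variables (Q Sigma : finType) (N : OCN Q Sigma).

Notation outcome := (outcome Q Sigma).

Definition lang_from (c : conf Q) (u : seq Sigma) : Prop :=
  exists c', reaches N c u c' /\ c'.1 \in final N.

Lemma reaches_cat c w c1 u c2 :
  reaches N c w c1 -> reaches N c1 u c2 -> reaches N c (w ++ u) c2.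
Proof.
by elim=> [//|c0 b t c' w0 c'' St _ IH] R2; apply: reaches_cons St (IH R2).
Qed.

Lemma reaches_rcons c w c1 a t c2 :
  reaches N c w c1 -> step N c1 a t c2 -> reaches N c (rcons w a) c2.
Proof.
by move=> R St; rewrite -cats1; apply: reaches_cat R (reaches_cons St (reaches_nil _ _)).
Qed.

Lemma valid_choice_functional c a o c1 c2 :
  valid_choice N c a o c1 -> valid_choice N c a o c2 -> c1 = c2.
Proof.
move=> [[[[q b] d] p] [-> [_ _ _ E1 F1]]] [_ [[<-] [_ _ _ E2 F2]]].
move: c1 c2 E1 F1 E2 F2 => [x1 y1] [x2 y2] /= -> F1 -> F2.
by move: F1; rewrite -F2 => -[->].
Qed.

Lemma round_cont_word s a h c w h' c' w' :
  round N s a (Cont h (c, w)) (Cont h' (c', w')) -> w' = rcons w a.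
Proof. by inversion 1. Qed.

Definition same_kind (o1 o2 : outcome) : Prop :=
  match o1, o2 with
  | Cont _ (c1, _), Cont _ (c2, _) => c1 = c2
  | EveWon, EveWon | AdamWon, AdamWon => True
  | _, _ => False
  end.

Lemma round_same_kind s1 s2 a h1 h2 c w1 w2 o1 o2 :
  s1 h1 (c, w1) a = s2 h2 (c, w2) a ->
  (forall u, lang N (w1 ++ u) <-> lang N (w2 ++ u)) ->
  round N s1 a (Cont h1 (c, w1)) o1 -> round N s2 a (Cont h2 (c, w2)) o2 ->
  same_kind o1 o2.
Proof.
move=> Es Ew; have Ea u : lang N (rcons w1 a ++ u) <-> lang N (rcons w2 a ++ u).
  by rewrite !cat_rcons.
have La : lang N (rcons w1 a) <-> lang N (rcons w2 a) by have := Ea [::]; rewrite !cats0.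
have Pa : is_prefix_of_lang N (rcons w1 a) <-> is_prefix_of_lang N (rcons w2 a).
  by split=> -[v /Ea Lv]; exists v.
move=> r1 r2; inversion r1; inversion r2; subst => //=;
  repeat match goal with
  | V : context [s1 h1 (c, w1) a] |- _ => rewrite Es in V
  | V1 : valid_choice _ _ _ _ ?x, V2 : valid_choice _ _ _ _ ?y |- _ =>
      have ? := valid_choice_functional V1 V2; clear V1; subst
  | V : valid_choice _ _ _ _ ?x, NV : forall c', ~ valid_choice _ _ _ _ _ |- _ =>
      by case: (NV _ V)
  end; tauto.
Qed.

Definition consistent (o : outcome) : Prop :=
  if o is Cont _ (c, w) then reaches N (init_conf N) w c /\ (lang N w -> c.1 \in final N)
  else True.

Lemma round_consistent s a o o' : round N s a o o' -> consistent o -> consistent o'.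
Proof.
case=> //= h c w c' [t [_ St]] NL [R _]; split; first exact: reaches_rcons R St.
by move=> L; apply/negPn/negP => F; apply: NL.
Qed.

Section Strategy.
Variable s : strategy Q Sigma.

Lemma round_total a o : exists o', round N s a o o'.
Proof.
case: o => [h [c w]||]; [|by eexists; constructor..].
have [[c' V]|NV] := classic (exists c', valid_choice N c a (s h (c, w) a) c').
  have [[L F]|NL] := classic (lang N (rcons w a) /\ c'.1 \notin final N).
    by eexists; apply: round_adam_acc V L F.
  by eexists; apply: round_cont V NL.
have {}NV c' : ~ valid_choice N c a (s h (c, w) a) c' by move=> V; apply: NV; exists c'.
have [E|NE] := classic (exists t c', step N c a t c').
  by eexists; apply: round_illegal.
have [P|NP] := classic (is_prefix_of_lang N (rcons w a)).
  by eexists; apply: round_stuck_lose.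
by eexists; apply: round_stuck_win.
Qed.

Definition next_outcome (o : outcome) (a : Sigma) : outcome :=
  proj1_sig (constructive_indefinite_description _ (round_total a o)).

Lemma next_outcomeP o a : round N s a o (next_outcome o a).
Proof. exact: proj2_sig (constructive_indefinite_description _ (round_total a o)). Qed.

Fixpoint canonical_play (alpha : nat -> Sigma) (n : nat) : outcome :=
  if n is m.+1 then next_outcome (canonical_play alpha m) (alpha m)
  else Cont [::] (init_conf N, [::]).

Lemma canonical_playP alpha : is_play N s alpha (canonical_play alpha).
Proof. by split=> // n; apply: next_outcomeP. Qed.

Lemma canonical_play_prefix alpha beta n :
  (forall k, k < n -> alpha k = beta k) -> canonical_play alpha n = canonical_play beta n.
Proof.
elim: n => [//|n IH] E /=.
by rewrite IH ?E // => k kn; apply: E; apply: ltnW.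
Qed.

Definition reachable (o : outcome) : Prop := exists alpha n, canonical_play alpha n = o.

Lemma reachable_init (a : Sigma) : reachable (Cont [::] (init_conf N, [::])).
Proof. by exists (fun=> a), 0. Qed.

Lemma reachable_next o (a : Sigma) : reachable o -> reachable (next_outcome o a).
Proof.
move=> [alpha [n <-]]; pose beta k := if k < n then alpha k else a.
exists beta, n.+1 => /=; rewrite /beta ltnn (@canonical_play_prefix beta alpha) //.
by move=> k kn; rewrite /beta kn.
Qed.

Lemma reachable_consistent o : reachable o -> consistent o.
Proof.
move=> [alpha [n <-]]; elim: n => [|n IH].
  by split=> [|[c [R F]]] /=; [apply: reaches_nil | inversion R; subst].
exact: round_consistent (next_outcomeP _ _) IH.
Qed.

Hypothesis s_winning : winning N s.

Lemma reachable_not_AdamWon o : reachable o -> o <> AdamWon Q Sigma.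
Proof. by move=> [alpha [n <-]]; apply: s_winning (canonical_playP alpha) n. Qed.

(* Forward direction, by induction on u: since s wins and w a is a prefix of
   the language, the next round continues along a transition on a. *)
Lemma reachable_residual h c w u :
  reachable (Cont h (c, w)) -> lang N (w ++ u) <-> lang_from c u.
Proof.
move=> Rch; split; last first.
  have [R0 _] := reachable_consistent Rch.
  by move=> [c' [R F]]; exists c'; split; first exact: reaches_cat R0 R.
elim: u h c w Rch => [|a u IH] h c w Rch.
  rewrite cats0 => L; exists c; split; first exact: reaches_nil.
  by case: (reachable_consistent Rch) => _; apply.
move=> L; have Rnext := reachable_next a Rch.
have := next_outcomeP (Cont h (c, w)) a; have := reachable_not_AdamWon Rnext.
move: Rnext; case: (next_outcome _ a) => [h' [c' w']||] Rnext NA r;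
  inversion r; subst => //.
- have [t [_ St]] : valid_choice N c a (s h (c, w) a) c' by [].
  have [c'' [R F]] : lang_from c' u by apply: (IH _ _ _ Rnext); rewrite cat_rcons.
  by exists c''; split; first exact: reaches_cons St R.
- have : is_prefix_of_lang N (rcons w a) by exists u; rewrite cat_rcons.
  by [].
Qed.

Definition conf_reachable (c : conf Q) : Prop :=
  exists hw, reachable (Cont hw.1 (c, hw.2)).

Definition witness (c : conf Q) : seq (position Q Sigma) * seq Sigma :=
  epsilon (inhabits ([::], [::])) (fun hw => reachable (Cont hw.1 (c, hw.2))).

Lemma witnessP c : conf_reachable c -> reachable (Cont (witness c).1 (c, (witness c).2)).
Proof. exact: epsilon_spec. Qed.

Definition positional : pos_strategy Q Sigma :=
  fun c a => s (witness c).1 (c, (witness c).2) a.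

Definition positional_inv (o : outcome) : Prop :=
  match o with
  | Cont _ (c, w) => conf_reachable c /\ forall u, lang N (w ++ u) <-> lang_from c u
  | EveWon => True
  | AdamWon => False
  end.

Lemma positional_inv_round a o o' :
  positional_inv o -> round N (lift_pos positional) a o o' -> positional_inv o'.
Proof.
case: o => [h [c w]|_|[]]; last by inversion 1.
move=> [Rc Lc] r.
have : lift_pos positional h (c, w) a = s (witness c).1 (c, (witness c).2) a by [].
move: (witness c) (witnessP Rc) => [hc wc] /= Rw Es.
have Ew u : lang N (w ++ u) <-> lang N (wc ++ u).
  by rewrite Lc (reachable_residual u Rw).
have := round_same_kind Es Ew r (next_outcomeP _ a).
have := next_outcomeP (Cont hc (c, wc)) a; have := reachable_next a Rw.
have := reachable_not_AdamWon (reachable_next a Rw).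
case: o' r => [h' [c' w']||] r; case: (next_outcome _ a) => [h1 [c1 w1]||] //=.
move=> _ Rnext rnext Ec; subst c1.
rewrite (round_cont_word r) (round_cont_word rnext) in Rnext *.
split=> [|u]; first by exists (h1, rcons wc a).
by rewrite -(reachable_residual u Rnext) !cat_rcons.
Qed.

Lemma positional_winning : winning N (lift_pos positional).
Proof.
move=> alpha o [o0 oS] n; suff : positional_inv (o n) by case: (o n).
elim: n => [|n IH]; last exact: positional_inv_round IH (oS n).
rewrite o0; split=> [|u]; first by exists ([::], [::]); apply: reachable_init (alpha 0).
exact: reachable_residual (reachable_init (alpha 0)).
Qed.

End Strategy.
End LetterGame.

Theorem proposition2 (Q Sigma : finType) (N : OCN Q Sigma) :
  eve_wins_letter_game N ->
  exists sigma : pos_strategy Q Sigma, winning N (lift_pos sigma).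
Proof. by move=> [s s_winning]; exists (positional N s); apply: positional_winning. Qed.
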